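(* Let $\Theta$ be a set, let $\ell:\Theta\to\mathbb{R}$ and $R:\Theta\to\mathbb{R}$ be real-valued functions, let $B\ge 1$ be an integer, let $\theta^{(0)},\dots,\theta^{(B)}\in\Theta$ and let $\mu^{(0)},\dots,\mu^{(B)}$ be real numbers. Suppose that for all $k=0,\dots,B-1$, \[ \ell(\theta^{(k+1)}) + \mu^{(k+1)} R(\theta^{(k+1)}) \le \ell(\theta^{(k)}) + \mu^{(k+1)} R(\theta^{(k)}) \quad\text{and}\quad \mu^{(k+1)} > \mu^{(k)}. \] Define \begin{align*} \mathcal{K}_> &= \{k \in \{0,\dots,B-1\}: \ \ell(\theta^{(k+1)}) + \mu^{(k)} R(\theta^{(k+1)})\ge \ell(\theta^{(k)}) + \mu^{(k)} R(\theta^{(k)})\}, \\ \mathcal{K}_< &= \{0,\dots,B-1\} \setminus \mathcal{K}_>,\\ S_> &= \sum_{k \in \mathcal{K}_>} \mu^{(k+1)} \big(R(\theta^{(k)}) - R(\theta^{(k+1)})\big), \\ S_< &= \sum_{k \in \mathcal{K}_<} \mu^{(k)} \big(R(\theta^{(k)}) - R(\theta^{(k+1)})\big). \end{align*} Then \[ \ell(\theta^{(B)}) \le \ell(\theta^{(0)}) + S_> + S_<. \]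
   Context: Here $\ell$ plays the role of an empirical risk and $R$ a (one-dimensional) regularization loss of model parameters $\theta$; $\theta^{(k)}$ and $\mu^{(k)}$ are the model parameter and penalty multiplier at iteration $k$ of a training process minimizing the penalized loss $\ell(\theta)+\mu R(\theta)$. *)

From HB Require Import structures.
From mathcomp Require Import all_boot all_order all_algebra.
From mathcomp Require Import reals.
Set Implicit Arguments. Unset Strict Implicit. Unset Printing Implicit Defensive.
Import Order.TTheory GRing.Theory Num.Theory.
Local Open Scope ring_scope.

From HB Require Import structures.
From mathcomp Require Import all_boot all_order all_algebra.
From mathcomp Require Import reals.
Set Implicit Arguments.
Unset Strict Implicit.
Unset Printing Implicit Defensive.

Import Order.TTheory GRing.Theory Num.Theory.
Local Open Scope ring_scope.

(* On K_> step k decreases the penalized loss with multiplier mu^(k+1) (by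
   hypothesis), on K_< it decreases it with multiplier mu^(k) (by definition of
   K_<); either way ell drops by at most that multiplier times
   R(theta^(k)) - R(theta^(k+1)), and summing these one-step bounds telescopes. *)

Section Telescope.

Variable R : numDomainType.

Lemma ler_telescope (f c : nat -> R) (n : nat) :
  (forall k, (k < n)%N -> f k.+1 <= f k + c k) ->
  f n <= f 0%N + \sum_(0 <= k < n) c k.
Proof.
move=> step; rewrite -lerBlDl -(telescope_sumr _ (leq0n n)).
by apply: ler_sum_nat => k /andP[_ lt_kn]; rewrite lerBlDl step.
Qed.

Lemma ler_telescope_split (f c d : nat -> R) (P : pred nat) (n : nat) :
  (forall k, (k < n)%N -> f k.+1 <= f k + (if P k then c k else d k)) ->
  f n <= f 0%N + \sum_(0 <= k < n | P k) c k + \sum_(0 <= k < n | ~~ P k) d k.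
Proof.
rewrite -addrA.
have -> : \sum_(0 <= k < n | P k) c k + \sum_(0 <= k < n | ~~ P k) d k
    = \sum_(0 <= k < n) (if P k then c k else d k) by rewrite big_if.
exact: ler_telescope.
Qed.

Lemma ler_penalized_descent (l l' r r' m : R) :
  l' + m * r' <= l + m * r -> l' <= l + m * (r - r').
Proof. by rewrite mulrBr addrA lerBrDr. Qed.

End Telescope.

Theorem corollary2 (R : realType) (Theta : Type)
  (ell Rg : Theta -> R) (B : nat) (theta : nat -> Theta) (mu : nat -> R) :
  (1 <= B)%N ->
  (forall k : nat, (k < B)%N ->
     ell (theta k.+1) + mu k.+1 * Rg (theta k.+1)
       <= ell (theta k) + mu k.+1 * Rg (theta k)) ->
  (forall k : nat, (k < B)%N -> mu k < mu k.+1) ->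
  let Kgt := fun k : nat =>
    ell (theta k.+1) + mu k * Rg (theta k.+1)
      >= ell (theta k) + mu k * Rg (theta k) in
  let Sgt := \sum_(0 <= k < B | Kgt k)
               mu k.+1 * (Rg (theta k) - Rg (theta k.+1)) in
  let Slt := \sum_(0 <= k < B | ~~ Kgt k)
               mu k * (Rg (theta k) - Rg (theta k.+1)) in
  ell (theta B) <= ell (theta 0%N) + Sgt + Slt.
Proof.
move=> _ descent _ /=.
apply: (@ler_telescope_split _ (ell \o theta)) => k lt_kB /=.
case: ifPn => [_ | not_Kgt]; apply: ler_penalized_descent; first exact: descent.
by apply: ltW; rewrite ltNge.
Qed.
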